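(* Let $p$ be an odd prime, $K$ a finite extension of $\mathbb{Q}_p$, and $K\subset K'\subset M\subset F$ finite extensions with $F/K$ Galois and $M/K'$ Galois. Let $E$ be a finite Galois extension of $\mathbb{Q}_p$ with $F\subset E$, let $\chi:\mathrm{Gal}(M/K')\to E^{\times}$ be a character, and put $m=[K':K]$. Then there exist $x_1,\dots,x_m\in M\otimes_K E$ such that: (i) for $x\in M\otimes_K E$, one has $gx=(1\otimes\chi(g)^{-1})x$ for all $g\in\mathrm{Gal}(M/K')$ if and only if $x=\sum_{i=1}^m(1\otimes a_i)x_i$ for some $a_1,\dots,a_m\in E$; (ii) for $a_1,\dots,a_m\in E$, one has $\sum_{i=1}^m(1\otimes a_i)x_i\in(M\otimes_K E)^{\times}$ if and only if $a_i\neq0$ for all $i$.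
   Context: $\mathrm{Gal}(M/K')$ acts on $M\otimes_K E$ through the first tensor factor; $K$ acts on $E$ via the natural inclusion $K\subset E$. *)

From HB Require Import structures.
From mathcomp Require Import all_boot all_order all_algebra all_fingroup all_field.
Set Implicit Arguments. Unset Strict Implicit. Unset Printing Implicit Defensive.
Import GRing.Theory.
Local Open Scope ring_scope.

(* Model of the base change  M (x)_K E, where the base field K is the ground
   field of L : splittingFieldType K and M, E : {subfield L}.
   Using the K-basis b := vbasis M of M, an element  sum_i b_i (x) e_i  of
   M (x)_K E is represented by the row vector (e_i)_i; it belongs to
   M (x)_K E iff every e_i lies in E. *)
Section Tensor.
Variables (K : fieldType) (L : splittingFieldType K) (M E : {subfield L}).

Definition tens := 'rV[L]_(\dim M).

Local Notation b := (vbasis M).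

Definition in_tens (x : tens) : Prop := forall i, x 0 i \in E.

(* multiplication: (b_i (x) e)(b_j (x) f) = b_i b_j (x) e f,
   with b_i b_j = sum_k c_ijk b_k, c_ijk in K *)
Definition tmul (x y : tens) : tens :=
  \row_k \sum_(i < \dim M) \sum_(j < \dim M)
     coord b k (b`_i * b`_j) *: (x 0 i * y 0 j).

(* 1 (x) a  =  sum_k b_k (x) (coord_k(1) a) *)
Definition tpure (a : L) : tens := \row_k (coord b k 1 *: a).

Definition tone : tens := tpure 1.

Definition tunit (x : tens) : Prop :=
  exists2 y, in_tens y & tmul x y = tone /\ tmul y x = tone.

(* action of g in Gal(M/.) on the first tensor factor:
   g (sum_i b_i (x) e_i) = sum_i g(b_i) (x) e_i *)
Definition galact (g : gal_of M) (x : tens) : tens :=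
  \row_k \sum_(i < \dim M) coord b k (g b`_i) *: x 0 i.

End Tensor.

From HB Require Import structures.
From mathcomp Require Import all_boot all_order all_algebra all_fingroup all_field.
Import GRing.Theory.
Local Open Scope ring_scope.
Set Implicit Arguments. Unset Strict Implicit. Unset Printing Implicit Defensive.

(* Every automorphism t of F gives a ring map  tens_ev t : M (x)_K E -> E,
   b (x) e |-> t(b) e, which only depends on the coset Gal(F/M) t.  By
   Dedekind's independence of characters, the maps attached to a transversal
   of these cosets identify M (x)_K E with the left Gal(F/M)-invariant
   E-valued functions on Gal(F/K): 1 (x) a becomes the constant a, the units
   become the nowhere vanishing functions, and g in Gal(M/K') acts by
   translation by a lift h of g.  The chi^-1-eigenvectors are therefore the
   functions with f(h t) = chi(h|_M)^-1 f(t) for h in Gal(F/K'); such an f is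
   determined by its values at representatives of the m cosets of Gal(F/K'),
   and x_i is the one equal to 1 at the i-th representative and vanishing
   off its coset. *)

Lemma rcoset_transversal (gT : finGroupType) (H G : {group gT}) n :
    H \subset G -> #|G : H|%g = n ->
  exists2 sigma : 'I_n -> gT, (forall j, sigma j \in G) &
    exists idx : gT -> 'I_n,
      forall t j, t \in G -> (t \in H :* sigma j)%g = (idx t == j).
Proof.
move=> sHG cardHG; pose C j := enum_val (cast_ord (esym cardHG) j).
have C_rcoset j : C j \in rcosets H G by apply: enum_valP.
pose sigma j := repr (C j).
have Csigma j : C j = (H :* sigma j)%g.
  rewrite /sigma; have /rcosetsP[x _ ->] := C_rcoset j.
  by apply/esym/rcoset_eqP; apply: mem_repr_rcoset.
exists sigma => [j|].
  have /rcosetsP[x Gx Cx] := C_rcoset j.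
  have /rcosetP[h Hh ->] : sigma j \in (H :* x)%g by rewrite -Cx Csigma rcoset_refl.
  by rewrite groupM // (subsetP sHG).
have HG : (H : {set gT}) \in rcosets H G.
  by apply/rcosetsP; exists 1%g; rewrite ?group1 ?mulg1.
exists (fun t => cast_ord cardHG (enum_rank_in HG (H :* t)%g)) => t j Gt.
have Ht : (H :* t)%g \in rcosets H G by apply/rcosetsP; exists t.
rewrite -(inj_eq (@cast_ord_inj _ _ (esym cardHG))) cast_ordK.
rewrite -(inj_eq enum_val_inj) enum_rankK_in // -/(C j) Csigma.
by apply/rcoset_eqP/eqP.
Qed.

Section Transversal.
Variables (gT : finGroupType) (H G : {group gT}) (n : nat).
Variables (sigma : 'I_n -> gT) (idx : gT -> 'I_n).
Hypotheses (sHG : H \subset G) (sigmaG : forall j, sigma j \in G)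
  (sigmaP : forall t j, t \in G -> (t \in H :* sigma j)%g = (idx t == j)).

Lemma transversal_idx j : idx (sigma j) = j.
Proof. by apply/eqP; rewrite -sigmaP ?rcoset_refl. Qed.

Lemma mem_rcoset_idx t : t \in G -> (t * (sigma (idx t))^-1 \in H)%g.
Proof. by move=> Gt; rewrite -mem_rcoset sigmaP. Qed.

Lemma transversal_idxMl h t : h \in H -> t \in G -> idx (h * t)%g = idx t.
Proof.
move=> Hh Gt; apply/eqP; rewrite -sigmaP ?groupM ?(subsetP sHG h Hh) //.
by rewrite mem_rcoset -mulgA groupMl // mem_rcoset_idx.
Qed.

End Transversal.

Section GaloisCosets.
Variables (K : fieldType) (L : splittingFieldType K) (F : {subfield L}).
Hypothesis galF : galois 1 F.

Lemma indexg_gal (X : {subfield L}) :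
  (X <= F)%VS -> #|'Gal(F / 1) : 'Gal(F / X)|%g = \dim X.
Proof.
move=> sXF; have galXF : galois X F by apply: galoisS galF; rewrite sub1v.
by rewrite -dim_fixed_galois ?galS ?sub1v // (galois_fixedField galXF) dimv1 divn1.
Qed.

Lemma gal_galTrace (X : {subfield L}) (sigma : gal_of F) a : a \in F ->
  sigma (galTrace X F a) = \sum_(t in ('Gal(F / X) :* sigma)%g) t a.
Proof.
move=> Fa; rewrite rmorph_sum [RHS](reindex_inj (mulIg sigma)) /=.
by apply: eq_big => [h | h _]; rewrite ?mem_rcoset ?mulgK ?galM.
Qed.

End GaloisCosets.

Lemma mxOver_det (R : comPzRingType) (S : subringClosed R) n (A : 'M[R]_n) :
  A \is a mxOver S -> \det A \in S.
Proof.
move/mxOverP=> SA; apply: rpred_sum => s _.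
by rewrite rpredMsign rpred_prod // => i _.
Qed.

Lemma mxOver_invmx (R : fieldType) (S : divringClosed R) n (A : 'M[R]_n) :
  A \is a mxOver S -> invmx A \is a mxOver S.
Proof.
move=> SA; rewrite /invmx; case: ifP => // _; apply/mxOverP => i j.
rewrite !mxE rpredM ?rpredV ?mxOver_det // /cofactor rpredMsign mxOver_det //.
by apply/mxOverP => k l; rewrite !mxE (mxOverP SA).
Qed.

Section TensorEvaluation.
Variables (K : fieldType) (L : splittingFieldType K) (M F E : {subfield L}).
Hypotheses (sMF : (M <= F)%VS) (sFE : (F <= E)%VS).
Local Notation b := (vbasis M).

Definition tens_ev (t : gal_of F) (x : tens M) : L :=
  \sum_(i < \dim M) t b`_i * x 0 i.

Lemma memv_vbasis_nth (i : 'I_(\dim M)) : b`_i \in M.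
Proof. by rewrite -tnth_nth vbasis_mem ?mem_tnth. Qed.

Lemma gal_coord (t : gal_of F) a :
  a \in M -> t a = \sum_(k < \dim M) coord b k a *: t b`_k.
Proof.
move=> Ma; rewrite {1}(coord_vbasis Ma) linear_sum.
by apply: eq_bigr => k _; rewrite linearZ.
Qed.

Lemma tens_ev_tmul t x y : tens_ev t (tmul x y) = tens_ev t x * tens_ev t y.
Proof.
rewrite /tens_ev /tmul mulr_suml.
under eq_bigr => k _ do rewrite mxE mulr_sumr.
rewrite exchange_big; apply: eq_bigr => i _.
under eq_bigr => k _ do rewrite mulr_sumr.
rewrite exchange_big mulr_sumr; apply: eq_bigr => j _ /=.
under eq_bigr => k _ do rewrite -scalerAr scalerAl.
rewrite -mulr_suml -gal_coord ?rpredM ?memv_vbasis_nth //.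
by rewrite rmorphM mulrACA.
Qed.

Lemma tens_ev_tpure t a : tens_ev t (tpure M a) = a.
Proof.
rewrite /tens_ev /tpure; under eq_bigr => k _ do rewrite mxE -scalerAr scalerAl.
by rewrite -mulr_suml -gal_coord ?mem1v // rmorph1 mul1r.
Qed.

Lemma tens_evB t x y : tens_ev t (x - y) = tens_ev t x - tens_ev t y.
Proof. by rewrite /tens_ev -sumrB; apply: eq_bigr => i _; rewrite !mxE mulrBr. Qed.

Lemma tens_ev_sum t (I : finType) (f : I -> tens M) :
  tens_ev t (\sum_i f i) = \sum_i tens_ev t (f i).
Proof.
rewrite /tens_ev exchange_big; apply: eq_bigr => k _.
by rewrite summxE mulr_sumr.
Qed.

Lemma tens_ev_galact t (g : gal_of M) (h : gal_of F) x :
  {in M, g =1 h} -> tens_ev t (galact g x) = tens_ev (h * t)%g x.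
Proof.
move=> gh; rewrite /tens_ev /galact.
under eq_bigr => k _ do rewrite mxE mulr_sumr.
rewrite exchange_big; apply: eq_bigr => i _ /=.
under eq_bigr => k _ do rewrite -scalerAr scalerAl.
have Mbi := memv_vbasis_nth i.
by rewrite -mulr_suml -gal_coord ?memv_gal // galM ?(subvP sMF) // gh.
Qed.

Lemma tens_ev_gal (h t : gal_of F) x :
  h \in 'Gal(F / M)%g -> tens_ev (h * t)%g x = tens_ev t x.
Proof.
move=> Hh; rewrite /tens_ev; apply: eq_bigr => i _.
by rewrite galM ?(subvP sMF) ?memv_vbasis_nth // (fixed_gal sMF Hh) ?memv_vbasis_nth.
Qed.

Lemma in_tensE (x : tens M) : in_tens E x <-> x \is a mxOver E.
Proof. by split=> [Ex | /mxOverP Ex i]; [apply/mxOverP => i j; rewrite ord1 | ]. Qed.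

Lemma tens_ev_in t x : in_tens E x -> tens_ev t x \in E.
Proof.
move=> Ex; apply: rpred_sum => i _; rewrite rpredM ?Ex //.
by rewrite (subvP sFE) ?memv_gal ?(subvP sMF) ?memv_vbasis_nth.
Qed.

Lemma in_tens_tpure a : a \in E -> in_tens E (tpure M a).
Proof. by move=> Ea i; rewrite mxE memvZ. Qed.

Lemma in_tens_tmul (x y : tens M) : in_tens E x -> in_tens E y -> in_tens E (tmul x y).
Proof.
move=> Ex Ey k; rewrite mxE; apply: rpred_sum => i _; apply: rpred_sum => j _.
by rewrite memvZ // rpredM.
Qed.

Lemma in_tens_sum (I : finType) (f : I -> tens M) :
  (forall i, in_tens E (f i)) -> in_tens E (\sum_i f i).
Proof. by move=> Ef k; rewrite summxE; apply: rpred_sum => i _; apply: Ef. Qed.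

End TensorEvaluation.

Section CosetRepresentatives.
Variables (K : fieldType) (L : splittingFieldType K) (M F E : {subfield L}).
Hypotheses (sMF : (M <= F)%VS) (sFE : (F <= E)%VS) (galF : galois 1 F).
Local Notation b := (vbasis M).
Local Notation G := 'Gal(F / 1)%g.
Local Notation H := 'Gal(F / M)%g.

Variables (sigma : 'I_(\dim M) -> gal_of F) (idx : gal_of F -> 'I_(\dim M)).
Hypotheses (sigmaG : forall j, sigma j \in G)
  (sigmaP : forall t j, t \in G -> (t \in H :* sigma j)%g = (idx t == j)).

Let sHG : H \subset G := galS F (sub1v M).

(* Summing over the coset H sigma_j gives sigma_j applied to the trace from F
   to M, so a relation among the sigma_j on M lifts to one among all of G. *)
Lemma gal_transversal_independent (v : 'I_(\dim M) -> L) :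
  (forall a, a \in M -> \sum_j v j * sigma j a = 0) -> forall j, v j = 0.
Proof.
move=> v0 j; rewrite -(transversal_idx sigmaG sigmaP j).
apply: (@gal_independent _ _ F (mem G) (fun t => v (idx t))) (sigmaG j) => a Fa.
have galMF : galois M F by apply: galoisS galF; rewrite sub1v.
rewrite (partition_big idx predT) //= -[RHS](v0 _ (mem_galTrace galMF Fa)).
apply: eq_bigr => k _; rewrite gal_galTrace // mulr_sumr.
apply: eq_big => [t | t /andP[_ /eqP<-] //].
have [Gt | nGt] := boolP (t \in G); first by rewrite sigmaP.
symmetry; apply/negbTE; apply: contra nGt => /rcosetP[h Hh ->].
by rewrite groupM ?sigmaG ?(subsetP sHG).
Qed.

Definition ev_mx : 'M[L]_(\dim M) := \matrix_(i, j) sigma j b`_i.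

Lemma tens_ev_mx (x : tens M) j : (x *m ev_mx) 0 j = tens_ev (sigma j) x.
Proof. by rewrite mxE; apply: eq_bigr => i _; rewrite mxE mulrC. Qed.

Lemma ev_mx_unit : ev_mx \in unitmx.
Proof.
rewrite unitmxE unitfE -det_tr; apply/negP => /det0P[v nzv vB0].
case/negP: nzv; apply/eqP/rowP => j; rewrite mxE.
apply: gal_transversal_independent => a Ma.
under eq_bigr => k _ do rewrite (gal_coord _ Ma) mulr_sumr.
rewrite exchange_big big1 // => i _.
under eq_bigr => k _ do rewrite -scalerAr.
have /rowP/(_ i) := vB0; rewrite !mxE => vBi.
rewrite -scaler_sumr; suff -> : \sum_k v 0 k * sigma k b`_i = 0 by rewrite scaler0.
by apply: etrans vBi; apply: eq_bigr => k _; rewrite !mxE.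
Qed.

Lemma tens_ev_inj (x y : tens M) :
  (forall t, t \in G -> tens_ev t x = tens_ev t y) -> x = y.
Proof.
move=> exy; apply/eqP; rewrite -subr_eq0 -(can_eq (mulmxK ev_mx_unit)) mul0mx.
apply/eqP/rowP => j; rewrite tens_ev_mx tens_evB exy ?subrr ?mxE //.
Qed.

Definition tens_of (f : gal_of F -> L) : tens M :=
  \row_j f (sigma j) *m invmx ev_mx.

Lemma tens_ofK (f : gal_of F -> L) :
    (forall h t, h \in H -> t \in G -> f (h * t)%g = f t) ->
  forall t, t \in G -> tens_ev t (tens_of f) = f t.
Proof.
move=> fH t Gt; rewrite -(mulgKV (sigma (idx t)) t).
have Ht := mem_rcoset_idx sigmaP Gt.
by rewrite tens_ev_gal // fH // -tens_ev_mx mulmxKV ?ev_mx_unit // mxE.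
Qed.

Lemma in_tens_of (f : gal_of F -> L) :
  (forall t, t \in G -> f t \in E) -> in_tens E (tens_of f).
Proof.
move=> fE; apply/in_tensE; rewrite mxOverM ?mxOver_invmx //.
  by apply/mxOverP => i j; rewrite mxE fE.
apply/mxOverP => i j; rewrite mxE (subvP sFE) ?memv_gal ?(subvP sMF) //.
exact: memv_vbasis_nth.
Qed.

Lemma tunitP (x : tens M) : in_tens E x ->
  tunit E x <-> forall t, t \in G -> tens_ev t x != 0.
Proof.
move=> Ex; split=> [[y _ [xy _]] t _ | nz_x].
  apply: contra_neq (oner_neq0 L) => ev0.
  by rewrite -(tens_ev_tpure M t 1) -/(tone M) -xy tens_ev_tmul ev0 mul0r.
pose y := tens_of (fun t => (tens_ev t x)^-1).
have yK t : t \in G -> tens_ev t y = (tens_ev t x)^-1.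
  by apply: tens_ofK => h {}t Hh _; rewrite tens_ev_gal.
exists y; first by apply: in_tens_of => t _; rewrite rpredV tens_ev_in.
split; apply: tens_ev_inj => t Gt;
  by rewrite tens_ev_tmul tens_ev_tpure yK ?mulfV ?mulVf ?nz_x.
Qed.

End CosetRepresentatives.

Section Eigenvectors.
Variables (K : fieldType) (L : splittingFieldType K) (K' M F E : {subfield L}).
Variable chi : gal_of M -> L.
Hypotheses (sK'M : (K' <= M)%VS) (sMF : (M <= F)%VS) (sFE : (F <= E)%VS).
Hypotheses (galF : galois 1 F) (galM : galois K' M).
Hypothesis chiE : forall g, g \in 'Gal(M / K')%g -> chi g \in E /\ chi g != 0.
Hypothesis chiM : forall g h, g \in 'Gal(M / K')%g -> h \in 'Gal(M / K')%g ->
  chi (g * h)%g = chi g * chi h.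
Local Notation G := 'Gal(F / 1)%g.
Local Notation H := 'Gal(F / M)%g.
Local Notation H' := 'Gal(F / K')%g.

Variables (sigma : 'I_(\dim M) -> gal_of F) (idx : gal_of F -> 'I_(\dim M)).
Hypotheses (sigmaG : forall j, sigma j \in G)
  (sigmaP : forall t j, t \in G -> (t \in H :* sigma j)%g = (idx t == j)).
Variables (rho : 'I_(\dim K') -> gal_of F) (idx' : gal_of F -> 'I_(\dim K')).
Hypotheses (rhoG : forall j, rho j \in G)
  (rhoP : forall t j, t \in G -> (t \in H' :* rho j)%g = (idx' t == j)).

Let sK'MF : (K' <= M <= F)%VS. Proof. by rewrite sK'M sMF. Qed.
Let nK'M : normalField K' M. Proof. by case/and3P: galM. Qed.
Let galK'F : galois K' F.
Proof. by apply: galoisS galF; rewrite sub1v (subv_trans sK'M sMF). Qed.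
Let sH'G : H' \subset G. Proof. exact: galS (sub1v _). Qed.
Local Notation res := (normalField_cast (E := F) M).

Let res_eq h : h \in H' -> {in M, res h =1 h}.
Proof. exact: normalField_cast_eq. Qed.

Let res_in h : h \in H' -> res h \in 'Gal(M / K')%g.
Proof.
by move=> Hh; rewrite -(normalField_img galK'F sK'MF nK'M) mem_morphim.
Qed.

Let res_onto g : g \in 'Gal(M / K')%g -> exists2 h, h \in H' & g = res h.
Proof.
by rewrite -(normalField_img galK'F sK'MF nK'M) => /morphimP[h _ Hh ->]; exists h.
Qed.

Let chi_res h t : h \in H' -> t \in H' ->
  chi (res (h * t)%g) = chi (res h) * chi (res t).
Proof. by move=> Hh Ht; rewrite (normalField_castM sK'MF nK'M) // chiM ?res_in. Qed.

Let chi_res_neq0 h : h \in H' -> chi (res h) != 0.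
Proof. by move/res_in/chiE=> []. Qed.

Let res_gal h : h \in H -> res h = 1%g.
Proof.
move=> Hh; apply: (mker (f := normalField_cast_morphism sK'MF nK'M)).
by rewrite normalField_ker.
Qed.

Let chi1 : chi 1%g = 1.
Proof.
have G1 := group1 'Gal(M / K')%G.
by apply: (mulfI (chiE G1).2); rewrite -chiM // mulg1 mulr1.
Qed.

Lemma galact_eigenP (x : tens M) :
  (forall g, g \in 'Gal(M / K')%g -> galact g x = tmul (tpure M (chi g)^-1) x) <->
  (forall h t, h \in H' -> t \in G ->
     tens_ev (h * t)%g x = (chi (res h))^-1 * tens_ev t x).
Proof.
split=> [eig_x h t Hh Gt | eig_x g /res_onto[h Hh ->]].
  rewrite -(tens_ev_galact sMF t x (res_eq Hh)) eig_x ?res_in //.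
  by rewrite tens_ev_tmul tens_ev_tpure.
apply: (tens_ev_inj sMF galF sigmaG sigmaP) => t Gt.
by rewrite (tens_ev_galact sMF t x (res_eq Hh)) eig_x // tens_ev_tmul tens_ev_tpure.
Qed.

Definition eig_fun j (t : gal_of F) : L :=
  if t \in (H' :* rho j)%g then (chi (res (t * (rho j)^-1)%g))^-1 else 0.

Definition eig_basis j : tens M := tens_of sigma (eig_fun j).

Lemma eig_funMl j h t :
  h \in H' -> eig_fun j (h * t)%g = (chi (res h))^-1 * eig_fun j t.
Proof.
move=> Hh; rewrite /eig_fun !mem_rcoset -mulgA groupMl //.
case: ifP => [tj | _]; last by rewrite mulr0.
by rewrite chi_res // invfM.
Qed.

Lemma tens_ev_eig_basis j t : t \in G -> tens_ev t (eig_basis j) = eig_fun j t.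
Proof.
apply: (tens_ofK sMF galF sigmaG sigmaP) => h {}t Hh _.
by rewrite eig_funMl ?(subsetP (galS F sK'M)) // res_gal // chi1 invr1 mul1r.
Qed.

Lemma eig_basis_in j : in_tens E (eig_basis j).
Proof.
rewrite /eig_basis; apply: (in_tens_of sMF sFE sigmaG) => t _; rewrite /eig_fun.
case: ifP => [tj | _]; last exact: rpred0.
by rewrite rpredV; apply: (chiE _).1; apply: res_in; rewrite -mem_rcoset.
Qed.

Lemma tens_ev_eig_span (a : 'I_(\dim K') -> L) t : t \in G ->
  tens_ev t (\sum_i tmul (tpure M (a i)) (eig_basis i)) =
  a (idx' t) * (chi (res (t * (rho (idx' t))^-1)%g))^-1.
Proof.
move=> Gt; rewrite tens_ev_sum (bigD1 (idx' t)) //= big1 ?addr0 => [|i ni].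
  by rewrite tens_ev_tmul tens_ev_tpure tens_ev_eig_basis // /eig_fun rhoP ?eqxx.
by rewrite tens_ev_tmul tens_ev_eig_basis // /eig_fun rhoP // eq_sym (negPf ni) mulr0.
Qed.

Lemma eigen_spanP (x : tens M) : in_tens E x ->
  (forall g, g \in 'Gal(M / K')%g -> galact g x = tmul (tpure M (chi g)^-1) x) <->
  exists2 a : 'I_(\dim K') -> L, (forall i, a i \in E) &
    x = \sum_(i < \dim K') tmul (tpure M (a i)) (eig_basis i).
Proof.
move=> Ex; apply: iff_trans (galact_eigenP x) _.
split=> [eig_x | [a _ ->] h t Hh Gt].
  exists (fun j => tens_ev (rho j) x) => [j|]; first exact: tens_ev_in.
  apply: (tens_ev_inj sMF galF sigmaG sigmaP) => t Gt.
  rewrite tens_ev_eig_span // -{1}(mulgKV (rho (idx' t)) t).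
  by rewrite eig_x ?(mem_rcoset_idx rhoP) // mulrC.
have Ght : (h * t)%g \in G by rewrite groupM ?(subsetP sH'G h Hh).
rewrite !tens_ev_eig_span // (transversal_idxMl sH'G rhoP) // -mulgA.
by rewrite (chi_res Hh (mem_rcoset_idx rhoP Gt)) invfM mulrCA.
Qed.

Lemma eigen_unitP (a : 'I_(\dim K') -> L) : (forall i, a i \in E) ->
  tunit E (\sum_(i < \dim K') tmul (tpure M (a i)) (eig_basis i)) <->
  forall i, a i != 0.
Proof.
move=> Ea.
have Ex : in_tens E (\sum_(i < \dim K') tmul (tpure M (a i)) (eig_basis i)).
  apply: in_tens_sum => i.
  by apply: in_tens_tmul; [exact: in_tens_tpure | exact: eig_basis_in].
apply: iff_trans (tunitP sMF sFE galF sigmaG sigmaP Ex) _.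
split=> [nz_ev i | nz_a t Gt].
  have := nz_ev _ (rhoG i); rewrite tens_ev_eig_span // (transversal_idx rhoG rhoP).
  by rewrite mulgV res_gal ?group1 // chi1 invr1 mulr1.
by rewrite tens_ev_eig_span // mulf_neq0 ?invr_eq0 ?chi_res_neq0 ?(mem_rcoset_idx rhoP).
Qed.

End Eigenvectors.

Theorem mainTheorem2 (K : fieldType) (L : splittingFieldType K)
    (K' M F E : {subfield L}) (chi : gal_of M -> L) :
  (K' <= M)%VS -> (M <= F)%VS -> (F <= E)%VS ->
  galois 1%VS F -> galois K' M ->
  (forall g, g \in 'Gal(M / K')%g -> chi g \in E /\ chi g != 0) ->
  (forall g h, g \in 'Gal(M / K')%g -> h \in 'Gal(M / K')%g ->
     chi (g * h)%g = chi g * chi h) ->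
  exists xs : 'I_(\dim K') -> tens M,
    (forall i, in_tens E (xs i)) /\
    (forall x : tens M, in_tens E x ->
       ((forall g, g \in 'Gal(M / K')%g ->
            galact g x = tmul (tpure M (chi g)^-1) x) <->
        exists2 a : 'I_(\dim K') -> L, (forall i, a i \in E) &
          x = \sum_(i < \dim K') tmul (tpure M (a i)) (xs i))) /\
    (forall a : 'I_(\dim K') -> L, (forall i, a i \in E) ->
       (tunit E (\sum_(i < \dim K') tmul (tpure M (a i)) (xs i)) <->
        forall i, a i != 0)).
Proof.
move=> sK'M sMF sFE galF galM chiE chiM.
have [sigma sigmaG [idx sigmaP]] :=
  rcoset_transversal (galS F (sub1v M)) (indexg_gal galF sMF).
have [rho rhoG [idx' rhoP]] :=
  rcoset_transversal (galS F (sub1v K')) (indexg_gal galF (subv_trans sK'M sMF)).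
exists (eig_basis chi sigma rho); split.
  exact: (eig_basis_in sK'M sMF sFE galF galM chiE sigmaG).
split=> [x | a].
  exact: (eigen_spanP sK'M sMF sFE galF galM chiE chiM sigmaG sigmaP rhoG rhoP).
exact: (eigen_unitP sK'M sMF sFE galF galM chiE chiM sigmaG sigmaP rhoG rhoP).
Qed.
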